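(* Let $q=|q|e^{i\varphi}$, where $|q|\in L^\infty(\mathbb{R})$ never vanishes and $\varphi:\mathbb{R}\to\mathbb{R}$ is locally absolutely continuous with $\partial_x\varphi\in L^\infty(\mathbb{R};\mathbb{R})$, and suppose that $u_\pm:=\frac12\partial_x\varphi\pm|q|\in L^\infty(\mathbb{R};\mathbb{R})$. Let $$L=\begin{pmatrix} i\partial_x & -iq\\ i\bar q & -i\partial_x\end{pmatrix}:H^1(\mathbb{R};\mathbb{C}^2)\to L^2(\mathbb{R};\mathbb{C}^2),\qquad \mathcal{L}=\begin{pmatrix} -u_- & i\partial_x\\ i\partial_x & -u_+\end{pmatrix}:H^1(\mathbb{R};\mathbb{C}^2)\to L^2(\mathbb{R};\mathbb{C}^2),$$ and let $M$ be the multiplication operator by the unitary matrix $$M=\frac1{\sqrt2}\begin{pmatrix} e^{-\frac12 i(\varphi-\frac\pi2)} & e^{\frac12 i(\varphi-\frac\pi2)}\\ e^{-\frac12 i(\varphi-\frac\pi2)} & -e^{\frac12 i(\varphi-\frac\pi2)}\end{pmatrix}.$$ Then $M$ maps $H^s(\mathbb{R};\mathbb{C}^2)$ bijectively onto itself for $s=0,1$, and $L$ and $\mathcal{L}$ are unitarily equivalent: $L=M^\ast\mathcal{L}M$.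
   Context: $L$ is the Lax operator of the one-dimensional cubic defocusing nonlinear Schrödinger equation $i\partial_t q+\partial_{xx}q=2|q|^2q$; $M^\ast$ denotes the conjugate transpose of $M$ (pointwise), which is its inverse. *)

From HB Require Import structures.
From mathcomp Require Import all_boot all_order all_algebra.
From mathcomp Require Import all_classical all_reals all_analysis.
From mathcomp Require Import complex.
Set Implicit Arguments. Unset Strict Implicit. Unset Printing Implicit Defensive.
Import Order.TTheory GRing.Theory Num.Theory.
Local Open Scope ring_scope.
Local Open Scope classical_set_scope.

Definition leb (R : realType) := @lebesgue_measure R.
Arguments leb R : clear implicits.

Definition rC (R : realType) (r : R) : R[i] := (r +i* 0)%C.
Definition iC (R : realType) : R[i] := (0 +i* 1)%C.
Arguments iC R : clear implicits.
Definition expi (R : realType) (t : R) : R[i] := (cos t +i* sin t)%C.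
Definition cmod (R : realType) (z : R[i]) : R :=
  Num.sqrt (complex.Re z ^+ 2 + complex.Im z ^+ 2).

Definition reF (R : realType) (f : R -> R[i]) : R -> R := fun x => complex.Re (f x).
Definition imF (R : realType) (f : R -> R[i]) : R -> R := fun x => complex.Im (f x).

Definition AC_on (R : realType) (f : R -> R) (a b : R) : Prop :=
  forall e : R, 0 < e -> exists2 d : R, 0 < d &
    forall (n : nat) (I : 'I_n -> R * R),
      (forall i, a <= (I i).1 /\ (I i).1 <= (I i).2 /\ (I i).2 <= b) ->
      (forall i j, i != j -> (I i).2 <= (I j).1 \/ (I j).2 <= (I i).1) ->
      \sum_(i < n) ((I i).2 - (I i).1) < d ->
      \sum_(i < n) `|f (I i).2 - f (I i).1| < e.

Definition locAC (R : realType) (f : R -> R) : Prop :=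
  forall a b : R, a < b -> AC_on f a b.

Definition locAC_C (R : realType) (f : R -> R[i]) : Prop :=
  locAC (reF f) /\ locAC (imF f).

Definition L2R (R : realType) (f : R -> R) : Prop :=
  measurable_fun setT f /\ (\int[leb R]_x ((f x) ^+ 2)%:E < +oo)%E.

Definition L2C (R : realType) (f : R -> R[i]) : Prop :=
  L2R (reF f) /\ L2R (imF f).

Definition LinfR (R : realType) (f : R -> R) : Prop :=
  measurable_fun setT f /\ exists C : R, \forall x \ae (leb R), `|f x| <= C.

Definition Linf_ae (R : realType) (f : R -> R) : Prop :=
  exists g : R -> R, LinfR g /\ \forall x \ae (leb R), f x = g x.

Definition cderivable (R : realType) (f : R -> R[i]) (x : R) : Prop :=
  derivable (reF f) x 1 /\ derivable (imF f) x 1.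
Definition cderiv (R : realType) (f : R -> R[i]) (x : R) : R[i] :=
  (derive1 (reF f) x +i* derive1 (imF f) x)%C.

(* H^1(R;C): locally AC representative in L^2 whose a.e. derivative is in L^2 *)
Definition H1C (R : realType) (f : R -> R[i]) : Prop :=
  locAC_C f /\ L2C f /\
  exists g : R -> R[i], L2C g /\
    \forall x \ae (leb R), cderivable f x /\ cderiv f x = g x.

Definition comp (R : realType) (F : R -> 'cV[R[i]]_2) (k : 'I_2) : R -> R[i] :=
  fun x => F x k ord0.
Definition vec2 (R : realType) (a b : R[i]) : 'cV[R[i]]_2 :=
  \col_(k < 2) (if val k == 0%N then a else b).

Definition L2V (R : realType) (F : R -> 'cV[R[i]]_2) : Prop :=
  L2C (comp F ord0) /\ L2C (comp F ord_max).
Definition H1V (R : realType) (F : R -> 'cV[R[i]]_2) : Prop :=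
  H1C (comp F ord0) /\ H1C (comp F ord_max).
Definition aeeqV (R : realType) (F G : R -> 'cV[R[i]]_2) : Prop :=
  \forall x \ae (leb R), F x = G x.

Definition u_plus (R : realType) (q : R -> R[i]) (phi : R -> R) (x : R) : R :=
  derive1 phi x / 2 + cmod (q x).
Definition u_minus (R : realType) (q : R -> R[i]) (phi : R -> R) (x : R) : R :=
  derive1 phi x / 2 - cmod (q x).

Definition Lop (R : realType) (q : R -> R[i]) (F : R -> 'cV[R[i]]_2) : R -> 'cV[R[i]]_2 :=
  fun x => vec2
    (iC R * cderiv (comp F ord0) x - iC R * q x * comp F ord_max x)
    (iC R * conjc (q x) * comp F ord0 x - iC R * cderiv (comp F ord_max) x).

Definition calLop (R : realType) (q : R -> R[i]) (phi : R -> R)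
    (F : R -> 'cV[R[i]]_2) : R -> 'cV[R[i]]_2 :=
  fun x => vec2
    (- rC (u_minus q phi x) * comp F ord0 x + iC R * cderiv (comp F ord_max) x)
    (iC R * cderiv (comp F ord0) x - rC (u_plus q phi x) * comp F ord_max x).

Definition Mmat (R : realType) (phi : R -> R) (x : R) : 'M[R[i]]_2 :=
  let th := phi x - pi / 2 in
  rC (Num.sqrt 2)^-1 *:
  \matrix_(i < 2, j < 2)
     (if val j == 0%N then expi (- (th / 2))
      else if val i == 0%N then expi (th / 2) else - expi (th / 2)).

Definition adjmx (R : realType) (A : 'M[R[i]]_2) : 'M[R[i]]_2 := map_mx conjc A^T.

Definition Mapp (R : realType) (phi : R -> R) (F : R -> 'cV[R[i]]_2) : R -> 'cV[R[i]]_2 :=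
  fun x => Mmat phi x *m F x.
Definition Mstar_app (R : realType) (phi : R -> R) (F : R -> 'cV[R[i]]_2) : R -> 'cV[R[i]]_2 :=
  fun x => adjmx (Mmat phi x) *m F x.

From Pilot Require Import Defs.
From HB Require Import structures.
From mathcomp Require Import all_boot all_order all_algebra.
From mathcomp Require Import all_classical all_reals all_analysis.
From mathcomp Require Import complex.
From mathcomp Require Import ring lra.
From mathcomp Require Import measurable_realfun.
Import Order.TTheory GRing.Theory Num.Theory numFieldNormedType.Exports.
Local Open Scope ring_scope.
Local Open Scope classical_set_scope.
Set Implicit Arguments. Unset Strict Implicit. Unset Printing Implicit Defensive.

(* M(x) is unitary for every x, so multiplication by M is a pointwise
   bijection with inverse M^*.  Every entry of M and of M^* has the form
   r e^(i(a phi + b)); since phi is locally absolutely continuous with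
   essentially bounded derivative, such an entry is bounded, locally
   absolutely continuous and has an essentially bounded derivative, so
   multiplication by it preserves L^2 and H^1.  Finally, wherever phi and F
   are differentiable, the product rule gives (MF)' = MF' + M diag(-i phi'/2,
   i phi'/2) F, and L F = M^* calL (M F) becomes an identity between 2x2
   matrices, which holds because q = |q| e^(i phi) and
   e^(i phi) = i (e^(i(phi - pi/2)/2))^2. *)

Section LaxConjugation.
Variable R : realType.
Local Notation mu := (leb R).

(* Instance search does not find [ae_filter_ringOfSetsType] for [leb R]. *)
#[local] Instance leb_ae_filter : Filter (nbhs (almost_everywhere mu)).
Proof. exact: ae_filter_ringOfSetsType. Qed.

Lemma L2R_dominated (f g : R -> R) (C : R) : 0 <= C -> L2R f -> measurable_fun setT g ->
  (\forall x \ae mu, g x ^+ 2 <= C * f x ^+ 2) -> L2R g.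
Proof.
move=> C0 [mf fi] mg gle; split => //.
have mf2 : measurable_fun setT (fun x => (f x ^+ 2)%:E).
  by apply/measurable_EFinP; exact: measurable_funX.
apply: (le_lt_trans (y := (\int[mu]_x (C%:E * (f x ^+ 2)%:E))%E)).
  apply: ae_ge0_le_integral => //.
  - by move=> x _; rewrite lee_fin sqr_ge0.
  - by apply/measurable_EFinP; exact: measurable_funX.
  - by move=> x _; rewrite -EFinM lee_fin mulr_ge0 // sqr_ge0.
  - by apply: emeasurable_funM => //; exact: measurable_cst.
  - by apply: filterS gle => x gx _; rewrite -EFinM lee_fin.
rewrite ge0_integralZl_EFin //; last by move=> x _; rewrite lee_fin sqr_ge0.
by apply: lte_mul_pinfty; rewrite ?lee_fin.
Qed.

Lemma L2R_add (f g : R -> R) : L2R f -> L2R g -> L2R (fun x => f x + g x).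
Proof.
move=> [mf fi] [mg gi]; split; first exact: measurable_funD.
have m2 (h : R -> R) : measurable_fun setT h ->
    measurable_fun setT (fun x => (2%:E * (h x ^+ 2)%:E)%E).
  move=> mh; apply: emeasurable_funM; first exact: measurable_cst.
  by apply/measurable_EFinP; exact: measurable_funX.
apply: (le_lt_trans
  (y := (\int[mu]_x (2%:E * (f x ^+ 2)%:E + 2%:E * (g x ^+ 2)%:E))%E)).
  apply: ge0_le_integral => //.
  - by move=> x _; rewrite lee_fin sqr_ge0.
  - by apply/measurable_EFinP; apply: measurable_funX; exact: measurable_funD.
  - by apply: emeasurable_funD; exact: m2.
  - move=> x _; rewrite -!EFinM -EFinD lee_fin.
    have := sqr_ge0 (f x - g x); nra.
rewrite ge0_integralD //; try exact: m2;
  try by move=> x _; rewrite mule_ge0 // lee_fin ?sqr_ge0.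
rewrite !ge0_integralZl_EFin //; try by move=> x _; rewrite lee_fin sqr_ge0.
- by apply: lte_add_pinfty; exact: lte_mul_pinfty.
- by apply/measurable_EFinP; exact: measurable_funX.
- by apply/measurable_EFinP; exact: measurable_funX.
Qed.

Lemma L2R_bounded_mul (h f : R -> R) (C : R) : measurable_fun setT h ->
  (\forall x \ae mu, `|h x| <= C) -> L2R f -> L2R (fun x => h x * f x).
Proof.
move=> mh hle Lf; apply: (L2R_dominated (C := C ^+ 2) (f := f)) => //.
- exact: sqr_ge0.
- by apply: measurable_funM => //; case: Lf.
apply: filterS hle => x hx; rewrite exprMn ler_wpM2r ?sqr_ge0 //.
rewrite -real_normK ?num_real //; have := normr_ge0 (h x); nra.
Qed.

Lemma AC_on_dominated (f g h : R -> R) (a b K1 K2 : R) : 0 <= K1 -> 0 <= K2 ->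
  AC_on f a b -> AC_on g a b ->
  (forall u v, a <= u -> u <= v -> v <= b ->
     `|h v - h u| <= K1 * `|f v - f u| + K2 * `|g v - g u|) ->
  AC_on h a b.
Proof.
move=> K10 K20 ACf ACg hle e e0.
have eK (K : R) : 0 <= K -> 0 < e / (2 * (K + 1)) /\ K * (e / (2 * (K + 1))) < e / 2.
  move=> K0; have eK0 : 0 < e / (2 * (K + 1)) by apply: divr_gt0 => //; lra.
  split => //; have : e / (2 * (K + 1)) * (2 * (K + 1)) = e by field; lra.
  move: eK0; set t := e / _ => t0 te.
  have -> : e / 2 = t * K + t by rewrite -te; field.
  lra.
have [e10 Ke1] := eK K1 K10; have [e20 Ke2] := eK K2 K20.
have [d1 d10 ACf1] := ACf _ e10; have [d2 d20 ACg2] := ACg _ e20.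
exists (Num.min d1 d2); first by rewrite lt_min d10 d20.
have min_d1 : Num.min d1 d2 <= d1 by rewrite ge_min lexx.
have min_d2 : Num.min d1 d2 <= d2 by rewrite ge_min lexx orbT.
move=> n I Iab Idisj Ilen.
have := ACf1 n I Iab Idisj (lt_le_trans Ilen min_d1).
have := ACg2 n I Iab Idisj (lt_le_trans Ilen min_d2).
set sf := \sum_(i < n) `|f _ - _|; set sg := \sum_(i < n) `|g _ - _| => sg_lt sf_lt.
apply: (le_lt_trans (y := K1 * sf + K2 * sg)).
  rewrite /sf /sg !mulr_sumr -big_split /=; apply: ler_sum => i _.
  by have [? [? ?]] := Iab i; exact: hle.
have := ler_wpM2l K10 (ltW sf_lt); have := ler_wpM2l K20 (ltW sg_lt); lra.
Qed.

Lemma locAC_continuous (f : R -> R) : locAC f -> continuous f.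
Proof.
move=> ACf x; apply/cvgrPdist_lt => e e0.
have [d d0 ACd] := ACf (x - 1) (x + 1) ltac:(lra) e e0.
have d10 : 0 < Num.min d 1 by rewrite lt_min d0 ltr01.
have min_d : Num.min d 1 <= d by rewrite ge_min lexx.
have min_1 : Num.min d 1 <= 1 by rewrite ge_min lexx orbT.
near=> t.
have : `|x - t| < Num.min d 1 by near: t; exact: (@cvgr_dist_lt _ _ _ (nbhs x) _ id).
have := ACd 1 (fun _ => (Num.min x t, Num.max x t)); rewrite !big_ord1 /=.
have ord1_disj (i j : 'I_1) : i != j -> False by rewrite !ord1.
case: (lerP x t) => xt.
- rewrite distrC => ACxt xt_lt.
  apply: ACxt; [move=> i /=; lra | by move=> i j /ord1_disj | lra].
- move=> ACxt xt_lt.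
  apply: ACxt; [move=> i /=; lra | by move=> i j /ord1_disj | lra].
Unshelve. all: by end_near.
Qed.

Lemma continuous_bounded_itv (f : R -> R) (a b : R) : continuous f ->
  exists B, forall x, a <= x <= b -> `|f x| <= B.
Proof.
move=> cf; have [ab|ba] := lerP a b; last first.
  by exists 0 => x /andP[ax xb]; have := le_trans ax xb; rewrite leNgt ba.
have cnf : continuous (fun x => `|f x|).
  by move=> x; apply: continuous_comp; [exact: cf | exact: norm_continuous].
have [c _ cmax] := EVT_max ab (continuous_subspaceT cnf).
by exists `|f c| => x xab; apply: cmax; rewrite in_itv.
Qed.

Lemma locAC_cst (c : R) : locAC (fun _ => c).
Proof.
move=> a b _ e e0; exists 1 => // n I _ _ _.
by rewrite big1 // => i _; rewrite subrr normr0.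
Qed.

Lemma locAC_add (f g : R -> R) : locAC f -> locAC g -> locAC (fun x => f x + g x).
Proof.
move=> ACf ACg a b ab; apply: (AC_on_dominated ler01 ler01 (ACf a b ab) (ACg a b ab)).
move=> u v _ _ _; rewrite !mul1r.
have -> : f v + g v - (f u + g u) = (f v - f u) + (g v - g u) by ring.
exact: ler_normD.
Qed.

Lemma locAC_mul (f g : R -> R) : locAC f -> locAC g -> locAC (fun x => f x * g x).
Proof.
move=> ACf ACg a b ab.
have [Bf Bfle] := continuous_bounded_itv a b (locAC_continuous ACf).
have [Bg Bgle] := continuous_bounded_itv a b (locAC_continuous ACg).
have aab : a <= a <= b by rewrite lexx ltW.
have Bf0 : 0 <= Bf by apply: le_trans (Bfle a aab).
have Bg0 : 0 <= Bg by apply: le_trans (Bgle a aab).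
apply: (AC_on_dominated Bg0 Bf0 (ACf a b ab) (ACg a b ab)) => u v au uv vb.
have -> : f v * g v - f u * g u = g u * (f v - f u) + f v * (g v - g u) by ring.
apply: (le_trans (ler_normD _ _)); rewrite !normrM.
apply: lerD; apply: ler_wpM2r => //.
- by apply: Bgle; rewrite au (le_trans uv vb).
- by apply: Bfle; rewrite vb (le_trans au uv).
Qed.

Lemma locAC_comp_lipschitz (g f : R -> R) (K : R) : 0 <= K ->
  (forall x y, `|g y - g x| <= K * `|y - x|) -> locAC f -> locAC (fun x => g (f x)).
Proof.
move=> K0 glip ACf a b ab.
apply: (AC_on_dominated K0 (lexx 0) (ACf a b ab) (ACf a b ab)) => u v _ _ _.
by rewrite mul0r addr0; exact: glip.
Qed.

Lemma cos_lipschitz (u v : R) : `|cos v - cos u| <= `|v - u|.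
Proof.
wlog uv : u v / u < v.
  move=> wlog_uv; have [/wlog_uv //|vu|->] := ltgtP u v; last by rewrite !subrr.
  by rewrite distrC [`|v - u|]distrC; exact: wlog_uv.
have [c _ ->] := MVT uv (fun x _ => is_derive_cos x)
  (continuous_subspaceT (@continuous_cos R)).
by rewrite normrM normrN -[leRHS]mul1r ler_wpM2r // sin_max.
Qed.

Lemma derivable_is_derive1 (f : R -> R) (x : R) :
  derivable f x 1 -> is_derive x 1 f (derive1 f x).
Proof. by move=> df; rewrite derive1E; exact: derivableP. Qed.

Lemma is_derive1_derive1 (f : R -> R) (x df : R) :
  is_derive x 1 f df -> derivable f x 1 /\ derive1 f x = df.
Proof. by move=> fdf; rewrite derive1E derive_val; split => //; exact: ex_derive. Qed.

Definition H1R (f : R -> R) : Prop := locAC f /\ L2R f /\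
  exists g, L2R g /\ \forall x \ae mu, derivable f x 1 /\ derive1 f x = g x.

Definition W1inf_loc (f : R -> R) : Prop := locAC f /\
  exists h, LinfR h /\ \forall x \ae mu, derivable f x 1 /\ derive1 f x = h x.

Definition W1inf (f : R -> R) : Prop := W1inf_loc f /\ exists C, forall x, `|f x| <= C.

Lemma W1inf_measurable (a : R -> R) : W1inf a -> measurable_fun setT a.
Proof.
by move=> [[ACa _] _]; apply: continuous_measurable_fun; exact: locAC_continuous.
Qed.

Lemma W1inf_cst (c : R) : W1inf (fun _ => c).
Proof.
split; last by exists `|c|.
split; first exact: locAC_cst.
exists (fun _ => 0); split.
  by split; [exact: measurable_cst | exists 0; apply: aeW => x; rewrite normr0].
by apply: aeW => x; apply: is_derive1_derive1; exact: is_derive_cst.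
Qed.

Lemma W1inf_locP (phi : R -> R) : locAC phi ->
  (\forall x \ae mu, derivable phi x 1) -> Linf_ae (derive1 phi) -> W1inf_loc phi.
Proof.
move=> ACphi dphi [h [Lh phi'h]]; split => //; exists h; split => //.
exact: filterI dphi phi'h.
Qed.

Lemma W1inf_cos (phi : R -> R) (r a b : R) : W1inf_loc phi ->
  W1inf (fun x => r * cos (a * phi x + b)).
Proof.
move=> [ACphi [h [[mh [C hle]] dphi]]].
split; last first.
  by exists `|r| => x; rewrite normrM -[leRHS]mulr1 ler_wpM2l // cos_max.
have cphi := locAC_continuous ACphi.
split.
  apply: locAC_mul; first exact: locAC_cst.
  apply: (locAC_comp_lipschitz (g := fun y => cos (a * y + b)) (normr_ge0 a)) => // x y.
  rewrite -normrM (_ : a * (y - x) = a * y + b - (a * x + b)); last by ring.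
  exact: cos_lipschitz.
exists (fun x => r * (- sin (a * phi x + b) * (a * h x))); split.
  split.
    apply: measurable_funM; first exact: measurable_cst.
    apply: measurable_funM; last by apply: measurable_funM => //; exact: measurable_cst.
    apply: measurable_funN; apply: continuous_measurable_fun => x.
    apply: continuous_comp; last exact: continuous_sin.
    apply: continuousD; last exact: cst_continuous.
    by apply: continuousM; [exact: cst_continuous | exact: cphi].
  exists (`|r| * `|a| * C); apply: filterS hle => x hx.
  rewrite !normrM normrN -!mulrA ler_wpM2l // mulrCA ler_wpM2l //.
  by rewrite -[leRHS]mul1r ler_pM // sin_max.
apply: filterS dphi => x [dx <-]; apply: is_derive1_derive1.
have dlin : is_derive x 1 (fun y => a * phi y + b) (a * derive1 phi x + 0).
  by apply: is_deriveD; exact: is_deriveZ (derivable_is_derive1 dx).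
have := is_deriveZ r (is_derive1_comp (is_derive_cos _) dlin).
by rewrite addr0.
Qed.

Lemma L2R_W1inf_mul (a f : R -> R) : W1inf a -> L2R f -> L2R (fun x => a x * f x).
Proof.
move=> Wa; have [_ [C aC]] := Wa.
by apply: (L2R_bounded_mul (C := C)); [exact: W1inf_measurable | exact: aeW].
Qed.

Lemma H1R_add (f g : R -> R) : H1R f -> H1R g -> H1R (fun x => f x + g x).
Proof.
move=> [ACf [Lf [f' [Lf' df]]]] [ACg [Lg [g' [Lg' dg]]]].
split; first exact: locAC_add.
split; first exact: L2R_add.
exists (fun x => f' x + g' x); split; first exact: L2R_add.
apply: filterS2 df dg => x [dfx <-] [dgx <-]; apply: is_derive1_derive1.
by apply: is_deriveD; exact: derivable_is_derive1.
Qed.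

Lemma H1R_W1inf_mul (a f : R -> R) : W1inf a -> H1R f -> H1R (fun x => a x * f x).
Proof.
move=> Wa [ACf [Lf [f' [Lf' df]]]].
have [[ACa [a' [[ma' [C a'C]] da]]] _] := Wa.
split; first exact: locAC_mul.
split; first exact: L2R_W1inf_mul.
exists (fun x => a x * f' x + f x * a' x); split.
  apply: L2R_add; first exact: L2R_W1inf_mul.
  under eq_fun do rewrite mulrC.
  exact: (L2R_bounded_mul (C := C)).
apply: filterS2 da df => x [dax <-] [dfx <-]; apply: is_derive1_derive1.
exact: is_deriveM (derivable_is_derive1 dax) (derivable_is_derive1 dfx).
Qed.

Lemma big_ord2 (V : nmodType) (F : 'I_2 -> V) : \sum_(i < 2) F i = F ord0 + F ord_max.
Proof. by rewrite big_ord_recl big_ord1; congr (_ + F _); exact: val_inj. Qed.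

Lemma ReD (z w : R[i]) : complex.Re (z + w) = complex.Re z + complex.Re w.
Proof. by case: z; case: w. Qed.

Lemma ImD (z w : R[i]) : complex.Im (z + w) = complex.Im z + complex.Im w.
Proof. by case: z; case: w. Qed.

Lemma ReM (z w : R[i]) :
  complex.Re (z * w) = complex.Re z * complex.Re w - complex.Im z * complex.Im w.
Proof. by case: z; case: w. Qed.

Lemma ImM (z w : R[i]) :
  complex.Im (z * w) = complex.Re z * complex.Im w + complex.Im z * complex.Re w.
Proof. by case: z; case: w. Qed.

Definition on_re_im (P : (R -> R) -> Prop) (f : R -> R[i]) : Prop :=
  P (reF f) /\ P (imF f).

Lemma H1C_on_re_im (f : R -> R[i]) : H1C f <-> on_re_im H1R f.
Proof.
split.
  move=> [[ACre ACim] [[Lre Lim] [g [[Lgre Lgim] df]]]].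
  split; (split; [done | split => //]).
  - exists (reF g); split => //; apply: filterS df => x [[dre _] gx].
    by rewrite [reF g x]/reF -gx.
  - exists (imF g); split => //; apply: filterS df => x [[_ dim] gx].
    by rewrite [imF g x]/imF -gx.
move=> [[ACre [Lre [g1 [Lg1 dre]]]] [ACim [Lim [g2 [Lg2 dim]]]]].
do 2 split => //; exists (fun x => (g1 x +i* g2 x)%C); split => //.
by apply: filterS2 dre dim => x [dre_x <-] [dim_x <-].
Qed.

Section OnReIm.
Variable P : (R -> R) -> Prop.
Hypothesis P_add : forall f g, P f -> P g -> P (fun x => f x + g x).
Hypothesis P_W1inf_mul : forall a f, W1inf a -> P f -> P (fun x => a x * f x).

Lemma on_re_im_add (f g : R -> R[i]) :
  on_re_im P f -> on_re_im P g -> on_re_im P (fun x => f x + g x).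
Proof.
move=> [fre fim] [gre gim]; rewrite /on_re_im /reF /imF.
by split; [under eq_fun do rewrite ReD | under eq_fun do rewrite ImD]; exact: P_add.
Qed.

Lemma on_re_im_W1inf_mul (m f : R -> R[i]) : on_re_im W1inf m ->
  on_re_im P f -> on_re_im P (fun x => m x * f x).
Proof.
move=> [mre mim] [fre fim].
have P_opp g : P g -> P (fun x => - g x).
  by move=> Pg; under eq_fun do rewrite -mulN1r; exact: P_W1inf_mul (W1inf_cst _) Pg.
rewrite /on_re_im /reF /imF; split.
- under eq_fun do rewrite ReM.
  by apply: P_add; [|apply: P_opp]; exact: P_W1inf_mul.
- under eq_fun do rewrite ImM.
  by apply: P_add; exact: P_W1inf_mul.
Qed.

Lemma on_re_im_mulmx (A : R -> 'M[R[i]]_2) (F : R -> 'cV[R[i]]_2) :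
  (forall i j, on_re_im W1inf (fun x => A x i j)) ->
  on_re_im P (Defs.comp F ord0) -> on_re_im P (Defs.comp F ord_max) ->
  forall k, on_re_im P (Defs.comp (fun x => A x *m F x) k).
Proof.
move=> WA PF0 PF1 k; rewrite /Defs.comp.
under eq_fun do rewrite mxE big_ord2.
by apply: on_re_im_add; apply: on_re_im_W1inf_mul.
Qed.

End OnReIm.

Lemma L2V_mulmx (A : R -> 'M[R[i]]_2) (F : R -> 'cV[R[i]]_2) :
  (forall i j, on_re_im W1inf (fun x => A x i j)) -> L2V F -> L2V (fun x => A x *m F x).
Proof.
move=> WA [LF0 LF1].
by split; apply: (on_re_im_mulmx L2R_add L2R_W1inf_mul WA).
Qed.

Lemma H1V_mulmx (A : R -> 'M[R[i]]_2) (F : R -> 'cV[R[i]]_2) :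
  (forall i j, on_re_im W1inf (fun x => A x i j)) -> H1V F -> H1V (fun x => A x *m F x).
Proof.
move=> WA [/H1C_on_re_im HF0 /H1C_on_re_im HF1].
by split; apply/H1C_on_re_im; apply: (on_re_im_mulmx H1R_add H1R_W1inf_mul WA).
Qed.

Definition expi_form (phi : R -> R) (m : R -> R[i]) : Prop :=
  exists r a b : R, forall x, m x = rC r * expi (a * phi x + b).

Lemma expi_form_W1inf (phi : R -> R) (m : R -> R[i]) :
  W1inf_loc phi -> expi_form phi m -> on_re_im W1inf m.
Proof.
move=> Wphi [r [a [b mE]]]; split.
- have -> : reF m = (fun x => r * cos (a * phi x + b)).
    by apply/funext => x; rewrite /reF mE ReM /=; ring.
  exact: W1inf_cos.
- have -> : imF m = (fun x => r * cos (a * phi x + (b - pi / 2))).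
    apply/funext => x; rewrite /imF mE ImM /= addrA cosBpihalf; ring.
  exact: W1inf_cos.
Qed.

Lemma rC_add (a b : R) : rC (a + b) = rC a + rC b.
Proof. exact: (rmorphD (real_complex R)). Qed.

Lemma rC_opp (a : R) : rC (- a) = - rC a.
Proof. exact: (rmorphN (real_complex R)). Qed.

Lemma conj_rC (r : R) : conjc (rC r) = rC r.
Proof. exact: conjc_real. Qed.

Lemma conjcM (z w : R[i]) : conjc (z * w) = conjc z * conjc w.
Proof. exact: rmorphM. Qed.

Lemma conjcN (z : R[i]) : conjc (- z) = - conjc z.
Proof. exact: rmorphN. Qed.

Lemma conj_expi (t : R) : conjc (expi t) = expi (- t).
Proof. by rewrite /expi cosN sinN. Qed.

Lemma expiD (s t : R) : expi s * expi t = expi (s + t).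
Proof. by apply/eqP; rewrite eq_complex /= cosD sinD; apply/andP; split; apply/eqP; ring. Qed.

Lemma expi_mulN (t : R) : expi t * expi (- t) = 1.
Proof. by rewrite expiD subrr /expi cos0 sin0. Qed.

Lemma Mmat_entry (phi : R -> R) (x : R) (i j : 'I_2) : Mmat phi x i j =
  rC (Num.sqrt 2)^-1 * (if val j == 0%N then expi (- ((phi x - pi / 2) / 2))
    else if val i == 0%N then expi ((phi x - pi / 2) / 2)
    else - expi ((phi x - pi / 2) / 2)).
Proof. by rewrite /Mmat !mxE. Qed.

Lemma Mmat_expi_form (phi : R -> R) (i j : 'I_2) : expi_form phi (fun x => Mmat phi x i j).
Proof.
set k := (Num.sqrt (2 : R))^-1.
have [a [b col0]] : exists a b, forall x, - ((phi x - pi / 2) / 2) = a * phi x + b.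
  by exists (- 2^-1), (pi / 2 / 2) => x; ring.
have [a' [b' col1]] : exists a b, forall x, (phi x - pi / 2) / 2 = a * phi x + b.
  by exists 2^-1, (- (pi / 2 / 2)) => x; ring.
case: i j => [[|[|//]] ?] [[|[|//]] ?].
- by exists k, a, b => x; rewrite Mmat_entry col0.
- by exists k, a', b' => x; rewrite Mmat_entry col1.
- by exists k, a, b => x; rewrite Mmat_entry col0.
- by exists (- k), a', b' => x; rewrite Mmat_entry col1 /= rC_opp mulrN mulNr.
Qed.

Lemma adjmx_Mmat_expi_form (phi : R -> R) (i j : 'I_2) :
  expi_form phi (fun x => adjmx (Mmat phi x) i j).
Proof.
have [r [a [b mE]]] := Mmat_expi_form phi j i.
exists r, (- a), (- b) => x.
by rewrite /adjmx mxE [_^T _ _]mxE mE conjcM conj_rC conj_expi opprD mulNr.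
Qed.

Lemma rC_invsqrt2_sqr : rC (Num.sqrt (2 : R))^-1 * rC (Num.sqrt 2)^-1 * 2 = 1.
Proof.
have sqrt2_sqr : Num.sqrt (2 : R) ^+ 2 = 2 by rewrite sqr_sqrtr.
have sqrt2_neq0 : Num.sqrt (2 : R) != 0 by rewrite sqrtr_eq0 -ltNge.
apply/eqP; rewrite eq_complex /=; apply/andP; split; apply/eqP; last by ring.
by rewrite -[1 + 1 in LHS]sqrt2_sqr; field.
Qed.

Lemma Mmat_unitary (phi : R -> R) (x : R) :
  adjmx (Mmat phi x) *m Mmat phi x = 1 /\ Mmat phi x *m adjmx (Mmat phi x) = 1.
Proof.
have psiN := expi_mulN ((phi x - pi / 2) / 2).
have k2 := rC_invsqrt2_sqr.
split; apply/matrixP => i j; rewrite !mxE !big_ord2 /adjmx !mxE.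
all: rewrite !conjcM conj_rC !(fun_if conjc) conjcN !conj_expi opprK.
all: case: i j => [[|[|//]] ?] [[|[|//]] ?] /=.
all: ring: psiN k2.
Qed.

Lemma Mstar_app_Mapp (phi : R -> R) (F : R -> 'cV[R[i]]_2) (x : R) :
  Mstar_app phi (Mapp phi F) x = F x.
Proof. by rewrite /Mstar_app /Mapp mulmxA (Mmat_unitary phi x).1 mul1mx. Qed.

Lemma Mapp_Mstar_app (phi : R -> R) (G : R -> 'cV[R[i]]_2) (x : R) :
  Mapp phi (Mstar_app phi G) x = G x.
Proof. by rewrite /Mstar_app /Mapp mulmxA (Mmat_unitary phi x).2 mul1mx. Qed.

Lemma Mapp_bijective (phi : R -> R) (P : (R -> 'cV[R[i]]_2) -> Prop) :
  (forall F, P F -> P (Mapp phi F)) -> (forall G, P G -> P (Mstar_app phi G)) ->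
  (forall F, P F -> P (Mapp phi F)) /\
  (forall F G, P F -> P G -> aeeqV (Mapp phi F) (Mapp phi G) -> aeeqV F G) /\
  (forall G, P G -> exists2 F, P F & aeeqV (Mapp phi F) G).
Proof.
move=> PM PMstar; split => //; split.
  move=> F G _ _; apply: filterS => x MFG.
  by rewrite -(Mstar_app_Mapp phi F) -(Mstar_app_Mapp phi G) /Mstar_app MFG.
move=> G PG; exists (Mstar_app phi G); first exact: PMstar.
by apply: aeW => x; exact: Mapp_Mstar_app.
Qed.

Definition is_cderive (f : R -> R[i]) (x : R) (df : R[i]) : Prop :=
  is_derive x 1 (reF f) (complex.Re df) /\ is_derive x 1 (imF f) (complex.Im df).

Lemma cderivable_is_cderive (f : R -> R[i]) (x : R) :
  cderivable f x -> is_cderive f x (cderiv f x).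
Proof. by move=> [dre dim]; split; exact: derivable_is_derive1. Qed.

Lemma is_cderive_cderiv (f : R -> R[i]) (x : R) (df : R[i]) :
  is_cderive f x df -> cderiv f x = df.
Proof.
move=> [/is_derive1_derive1 [_ re_df] /is_derive1_derive1 [_ im_df]].
by rewrite /cderiv re_df im_df; case: df {re_df im_df}.
Qed.

Lemma is_cderive_add (f g : R -> R[i]) (x : R) (df dg : R[i]) :
  is_cderive f x df -> is_cderive g x dg -> is_cderive (fun y => f y + g y) x (df + dg).
Proof.
move=> [fre fim] [gre gim]; rewrite /is_cderive /reF /imF /= ReD ImD.
by split; [under eq_fun do rewrite ReD | under eq_fun do rewrite ImD]; exact: is_deriveD.
Qed.

Lemma is_cderive_mul (f g : R -> R[i]) (x : R) (df dg : R[i]) :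
  is_cderive f x df -> is_cderive g x dg ->
  is_cderive (fun y => f y * g y) x (df * g x + f x * dg).
Proof.
move=> [fre fim] [gre gim]; rewrite /is_cderive /reF /imF /=; split.
- under eq_fun do rewrite ReM.
  apply: is_derive_eq (is_deriveB (is_deriveM fre gre) (is_deriveM fim gim)) _.
  by rewrite ReD !ReM /reF /imF /GRing.scale /=; ring.
- under eq_fun do rewrite ImM.
  apply: is_derive_eq (is_deriveD (is_deriveM fre gim) (is_deriveM fim gre)) _.
  by rewrite ImD !ImM /reF /imF /GRing.scale /=; ring.
Qed.

Lemma is_cderive_cst (c : R[i]) (x : R) : is_cderive (fun _ => c) x 0.
Proof. by split; exact: is_derive_cst. Qed.

Lemma is_cderive_expi (psi : R -> R) (x dpsi : R) : is_derive x 1 psi dpsi ->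
  is_cderive (fun y => expi (psi y)) x (expi (psi x) * (iC R * rC dpsi)).
Proof.
move=> dpsi_x; split.
- apply: is_derive_eq (is_derive1_comp (is_derive_cos _) dpsi_x) _.
  by rewrite /expi /iC /rC /=; ring.
- apply: is_derive_eq (is_derive1_comp (is_derive_sin _) dpsi_x) _.
  by rewrite /expi /iC /rC /=; ring.
Qed.

Lemma is_cderive_scale_expi (c : R[i]) (psi : R -> R) (x dpsi : R) :
  is_derive x 1 psi dpsi ->
  is_cderive (fun y => c * expi (psi y)) x (c * expi (psi x) * (iC R * rC dpsi)).
Proof.
move=> dpsi_x; have := is_cderive_mul (is_cderive_cst c x) (is_cderive_expi dpsi_x).
by rewrite mul0r add0r mulrA.
Qed.

Lemma Mmat_is_cderive (phi : R -> R) (x : R) (i j : 'I_2) : derivable phi x 1 ->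
  is_cderive (fun y => Mmat phi y i j) x (Mmat phi x i j *
    (iC R * rC (if val j == 0%N then - (derive1 phi x / 2) else derive1 phi x / 2))).
Proof.
move=> dphi.
have dpsi : is_derive x 1 (fun y => (phi y - pi / 2) / 2) (derive1 phi x / 2).
  have -> : (fun y => (phi y - pi / 2) / 2) = 2^-1 \*: (phi - cst (pi / 2)).
    by apply/funext => y; rewrite /= mulrC.
  apply: is_derive_eq (is_deriveZ _ (is_deriveB (derivable_is_derive1 dphi)
    (is_derive_cst _ _ _))) _.
  by rewrite subr0 mulrC.
under eq_fun do rewrite Mmat_entry; rewrite Mmat_entry.
case: i j => [[|[|//]] ?] [[|[|//]] ?] /=.
- exact: is_cderive_scale_expi (is_deriveN dpsi).
- exact: is_cderive_scale_expi dpsi.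
- exact: is_cderive_scale_expi (is_deriveN dpsi).
- under eq_fun do rewrite mulrN -mulNr; rewrite mulrN -mulNr.
  exact: is_cderive_scale_expi dpsi.
Qed.

Lemma is_cderive_Mapp (phi : R -> R) (F : R -> 'cV[R[i]]_2) (x : R) (k : 'I_2) :
  derivable phi x 1 ->
  cderivable (Defs.comp F ord0) x -> cderivable (Defs.comp F ord_max) x ->
  is_cderive (Defs.comp (Mapp phi F) k) x
    (Mmat phi x k ord0 * (iC R * rC (- (derive1 phi x / 2))) * Defs.comp F ord0 x
     + Mmat phi x k ord0 * cderiv (Defs.comp F ord0) x
     + (Mmat phi x k ord_max * (iC R * rC (derive1 phi x / 2)) * Defs.comp F ord_max x
     + Mmat phi x k ord_max * cderiv (Defs.comp F ord_max) x)).
Proof.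
move=> dphi dF0 dF1; rewrite {1}/Defs.comp /Mapp.
under eq_fun do rewrite mxE big_ord2.
apply: is_cderive_add; apply: is_cderive_mul; first exact: (Mmat_is_cderive k ord0 dphi).
- exact: cderivable_is_cderive.
- exact: (Mmat_is_cderive k ord_max dphi).
- exact: cderivable_is_cderive.
Qed.

Lemma Lop_Mstar_calLop_Mapp_at (q : R -> R[i]) (phi : R -> R)
    (F : R -> 'cV[R[i]]_2) (x : R) :
  q x = rC (cmod (q x)) * expi (phi x) -> derivable phi x 1 ->
  cderivable (Defs.comp F ord0) x -> cderivable (Defs.comp F ord_max) x ->
  Lop q F x = Mstar_app phi (calLop q phi (Mapp phi F)) x.
Proof.
move=> qE dphi dF0 dF1.
have DMF k := is_cderive_cderiv (is_cderive_Mapp k dphi dF0 dF1).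
rewrite /Lop /calLop /Mstar_app !DMF /u_minus /u_plus.
set Q := cmod (q x) in qE *; set psi := (phi x - pi / 2) / 2.
have expi_phi : expi (phi x) = iC R * expi psi * expi psi.
  rewrite -mulrA expiD (_ : psi + psi = phi x - pi / 2); last by rewrite /psi; field.
  apply/eqP; rewrite eq_complex /= cosBpihalf sinBpihalf.
  by apply/andP; split; apply/eqP; ring.
have conj_expi_phi : conjc (expi (phi x)) = - iC R * expi (- psi) * expi (- psi).
  rewrite expi_phi !conjcM !conj_expi; congr (_ * _ * _).
  by apply/eqP; rewrite eq_complex /= oppr0 !eqxx.
have psiN := expi_mulN psi.
have k2 := rC_invsqrt2_sqr.
have i2 : iC R * iC R = -1.
  by apply/eqP; rewrite eq_complex /=; apply/andP; split; apply/eqP; ring.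
have MF k : Defs.comp (Mapp phi F) k x =
    Mmat phi x k ord0 * Defs.comp F ord0 x + Mmat phi x k ord_max * Defs.comp F ord_max x.
  by rewrite /Defs.comp /Mapp mxE big_ord2.
rewrite !MF qE conjcM conj_rC conj_expi_phi expi_phi !rC_add !rC_opp.
apply/matrixP => i j; rewrite !mxE big_ord2 !mxE -/psi.
rewrite !conjcM conj_rC !(fun_if conjc) conjcN !conj_expi opprK.
(* [ring] uses [k2] only as a rewrite rule: multiplying the left-hand side
   by [1 = k * k * 2] lets both sides normalise alike. *)
have k2E (z : R[i]) : z = rC (Num.sqrt 2)^-1 * rC (Num.sqrt 2)^-1 * 2 * z.
  by rewrite k2 mul1r.
case: i j => [[|[|//]] ?] [[|//] ?] /=; rewrite [LHS]k2E; ring: psiN k2 i2.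
Qed.

Lemma Lop_ae_Mstar_calLop_Mapp (q : R -> R[i]) (phi : R -> R)
    (F : R -> 'cV[R[i]]_2) :
  (forall x, q x = rC (cmod (q x)) * expi (phi x)) ->
  (\forall x \ae mu, derivable phi x 1) -> H1V F ->
  aeeqV (Lop q F) (Mstar_app phi (calLop q phi (Mapp phi F))).
Proof.
move=> qE dphi [[_ [_ [? [_ dF0]]]] [_ [_ [? [_ dF1]]]]].
apply: filterS (filterI dphi (filterI dF0 dF1)) => x [dphi_x [[dF0_x _] [dF1_x _]]].
exact: Lop_Mstar_calLop_Mapp_at.
Qed.

End LaxConjugation.

Unset Implicit Arguments.

Theorem lemma2p1 (R : realType) (q : R -> R[i]) (phi : R -> R) :
  (* q = |q| e^{i phi}, |q| never vanishes, |q| in L^infty *)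
  (forall x, q x = rC (cmod (q x)) * expi (phi x)) ->
  (forall x, cmod (q x) != 0) ->
  Linf_ae (fun x => cmod (q x)) ->
  (* phi locally absolutely continuous with phi' in L^infty *)
  locAC phi ->
  (\forall x \ae (leb R), derivable phi x 1) ->
  Linf_ae (derive1 phi) ->
  (* u_pm in L^infty *)
  Linf_ae (u_plus q phi) ->
  Linf_ae (u_minus q phi) ->
  (* M : L^2 -> L^2 bijective (on a.e.-classes) *)
  ((forall F, L2V F -> L2V (Mapp phi F)) /\
   (forall F G, L2V F -> L2V G -> aeeqV (Mapp phi F) (Mapp phi G) -> aeeqV F G) /\
   (forall G, L2V G -> exists2 F, L2V F & aeeqV (Mapp phi F) G)) /\
  (* M : H^1 -> H^1 bijective (on a.e.-classes) *)
  ((forall F, H1V F -> H1V (Mapp phi F)) /\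
   (forall F G, H1V F -> H1V G -> aeeqV (Mapp phi F) (Mapp phi G) -> aeeqV F G) /\
   (forall G, H1V G -> exists2 F, H1V F & aeeqV (Mapp phi F) G)) /\
  (* L = M^* calL M on H^1 *)
  (forall F, H1V F ->
     aeeqV (Lop q F) (Mstar_app phi (calLop q phi (Mapp phi F)))).
Proof.
move=> qE _ _ ACphi dphi Lphi' _ _.
have Wphi := W1inf_locP ACphi dphi Lphi'.
have WM i j := expi_form_W1inf Wphi (Mmat_expi_form phi i j).
have WMstar i j := expi_form_W1inf Wphi (adjmx_Mmat_expi_form phi i j).
split; [|split].
- by apply: Mapp_bijective => F; [exact: L2V_mulmx WM | exact: L2V_mulmx WMstar].
- by apply: Mapp_bijective => F; [exact: H1V_mulmx WM | exact: H1V_mulmx WMstar].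
- by move=> F; exact: Lop_ae_Mstar_calLop_Mapp.
Qed.
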